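(* Let $E$ be a finite set and $\P$ a poset on $E$. Suppose $\mathcal{B}$ is the set of bases of some U-matroid with characteristic poset $\P$. Then $\mathcal{B}^*=\{E\setminus B: B\in\mathcal{B}\}$ is the set of bases of a U-matroid with characteristic poset $\P^*$ (the dual poset of $\P$, obtained by reversing all relations).
   Context: A U-matroid is a triple $(E,\mathcal{D},\rho)$ with $\mathcal{D}\subseteq2^E$ an accessible distributive lattice (containing $\emptyset,E$, closed under $\cup,\cap$, each nonempty $A\in\mathcal{D}$ has some $x$ with $A\setminus\{x\}\in\mathcal{D}$) and $\rho:\mathcal{D}\to\mathbb{N}$ satisfying $\rho(\emptyset)=0$; $\rho(A)\le\rho(B)$ for $A\subseteq B$; $\rho(A)+\rho(B)\ge\rho(A\cup B)+\rho(A\cap B)$; and $\rho(A\cup\{e\})-\rho(A)\le1$ whenever $A,A\cup\{e\}\in\mathcal{D}$. Its characteristic poset is the poset on $E$ with $i\le j$ iff every element of $\mathcal{D}$ containing $j$ also contains $i$ (so $\mathcal{D}$ is the lattice of order ideals of this poset). Its bases are the supports of the vertices of the base polyhedron $\{\mathbf{x}\in\mathbb{R}^E:\sum_{a\in A}x_a\le\rho(A)\ \forall A\in\mathcal{D},\ \sum_{e\in E}x_e=\rho(E)\}$. *)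

From HB Require Import structures.
From mathcomp Require Import all_boot all_order all_algebra.
From mathcomp Require Import reals.
Set Implicit Arguments. Unset Strict Implicit. Unset Printing Implicit Defensive.
Import Order.TTheory GRing.Theory Num.Theory.
Local Open Scope ring_scope.

Definition accessible_distr_lattice (E : finType) (D : {set {set E}}) : Prop :=
  [/\ set0 \in D, setT \in D,
      (forall A B, A \in D -> B \in D -> A :|: B \in D),
      (forall A B, A \in D -> B \in D -> A :&: B \in D)
    & (forall A, A \in D -> A != set0 -> exists2 x, x \in A & A :\ x \in D)].

(* U-matroid (E, D, rho); rho only matters on D. *)
Definition is_umatroid (E : finType) (D : {set {set E}}) (rho : {set E} -> nat)
  : Prop :=
  [/\ accessible_distr_lattice D,
      rho set0 = 0%N,
      (forall A B, A \in D -> B \in D -> A \subset B -> (rho A <= rho B)%N),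
      (forall A B, A \in D -> B \in D ->
         (rho (A :|: B) + rho (A :&: B) <= rho A + rho B)%N)
    & (forall A e, A \in D -> A :|: [set e] \in D ->
         (rho (A :|: [set e]) <= (rho A).+1)%N)].

Definition char_le (E : finType) (D : {set {set E}}) (i j : E) : Prop :=
  forall A, A \in D -> j \in A -> i \in A.

Definition is_poset (E : finType) (le : rel E) : Prop :=
  [/\ reflexive le, antisymmetric le & transitive le].

Definition dual_rel (E : finType) (le : rel E) : rel E := fun i j => le j i.

Definition in_base_polyhedron (R : realType) (E : finType) (D : {set {set E}})
  (rho : {set E} -> nat) (x : {ffun E -> R}) : Prop :=
  (forall A, A \in D -> \sum_(a in A) x a <= (rho A)%:R)
  /\ \sum_(e : E) x e = (rho setT)%:R.

Definition is_vertex (R : realType) (E : finType) (D : {set {set E}})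
  (rho : {set E} -> nat) (x : {ffun E -> R}) : Prop :=
  in_base_polyhedron D rho x /\
  (forall (y z : {ffun E -> R}) (t : R),
     in_base_polyhedron D rho y -> in_base_polyhedron D rho z ->
     0 < t -> t < 1 -> (forall e, x e = t * y e + (1 - t) * z e) -> y = z).

Definition support (R : realType) (E : finType) (x : {ffun E -> R}) : {set E} :=
  [set e | x e != 0].

Definition is_basis (R : realType) (E : finType) (D : {set {set E}})
  (rho : {set E} -> nat) (B : {set E}) : Prop :=
  exists x : {ffun E -> R}, is_vertex D rho x /\ B = support x.

Definition umatroid_bases (R : realType) (E : finType) (le : rel E)
  (Bs : {set {set E}}) : Prop :=
  exists (D : {set {set E}}) (rho : {set E} -> nat),
    [/\ is_umatroid D rho,
        (forall i j, le i j <-> char_le D i j)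
      & (forall B, B \in Bs <-> is_basis R D rho B)].

From Pilot Require Import Defs.
From HB Require Import structures.
From mathcomp Require Import all_boot all_order all_algebra.
From mathcomp Require Import reals.
From mathcomp Require Import lra zify.
Set Implicit Arguments. Unset Strict Implicit. Unset Printing Implicit Defensive.
Import Order.TTheory GRing.Theory Num.Theory.
Local Open Scope ring_scope.

(* Complementation x |-> 1 - x maps the base polyhedron of (D, rho) affinely
   onto that of the dual lattice D^* = {E \ A : A in D} with the rank
   rho^*(A) = |A| + rho(E \ A) - rho(E), hence vertices to vertices.
   Accessibility lets every C strictly inside C' in D grow inside D one point at
   a time, so rho(C') <= rho(C) + |C' \ C|, which makes rho^* a U-matroid rank.
   Vertices are 0/1 vectors: at a vertex x, the smallest tight set containing e
   is the largest tight set below it avoiding e, plus e itself, and the ranks of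
   these two sets differ by at most 1. So the dual vertices have exactly the
   complements of the bases as supports, and complementing D reverses its
   characteristic poset. *)

Definition dual_lattice (E : finType) (D : {set {set E}}) : {set {set E}} :=
  [set ~: A | A in D].

Lemma mem_dual_lattice (E : finType) (D : {set {set E}}) (A : {set E}) :
  (A \in dual_lattice D) = (~: A \in D).
Proof.
apply/imsetP/idP => [[B BD ->]|AD]; first by rewrite setCK.
by exists (~: A); rewrite ?setCK.
Qed.

Lemma char_le_dual (E : finType) (D : {set {set E}}) (i j : E) :
  char_le (dual_lattice D) i j <-> char_le D j i.
Proof.
split=> le_ij A AD.
  move=> iA; apply: contraT => jA.
  have /le_ij : ~: A \in dual_lattice D by rewrite mem_dual_lattice setCK.
  by rewrite !inE iA => /(_ jA).
rewrite mem_dual_lattice in AD; move=> jA; apply: contraT => iA.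
by have := le_ij _ AD; rewrite !inE jA => /(_ iA).
Qed.

Section AccessibleLattice.

Variables (E : finType) (D : {set {set E}}).
Hypothesis HD : accessible_distr_lattice D.

Definition principal (x : E) : {set E} := \bigcap_(A in D | x \in A) A.

Lemma principal_in_lattice x : principal x \in D.
Proof.
have [_ DT _ DI _] := HD.
by apply: (big_ind (fun A => A \in D)) => // A /andP [].
Qed.

Lemma mem_principal x : x \in principal x.
Proof. by apply/bigcapP => A /andP []. Qed.

Lemma principal_min x A : A \in D -> x \in A -> principal x \subset A.
Proof. by move=> AD xA; apply: bigcap_inf; rewrite AD xA. Qed.

Lemma principalD1_in_lattice x : principal x :\ x \in D.
Proof.
have [_ _ _ _ Dacc] := HD.
have /(Dacc _ (principal_in_lattice x)) [y yPx PxyD] :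
  principal x != set0 by apply/set0Pn; exists x; apply: mem_principal.
case: (eqVneq y x) => [yx | nyx]; first by rewrite yx in PxyD.
have /subsetP/(_ y yPx) : principal x \subset principal x :\ y.
  by apply: principal_min; rewrite // !inE eq_sym nyx mem_principal.
by rewrite !inE eqxx.
Qed.

(* A point of [C' :\: C] with a smallest principal set has its whole principal
   set, apart from itself, inside [C]. *)
Lemma lattice_augment C C' : C \in D -> C' \in D -> C \proper C' ->
  exists2 x, x \in C' :\: C & C :|: [set x] \in D.
Proof.
move=> CD C'D /properP [CC' [x0 x0C' x0C]].
have x0CC : x0 \in C' :\: C by rewrite inE x0C x0C'.
case: (arg_minnP (fun y => #|principal y|) x0CC) => x xCC xmin.
exists x => //; have [_ _ DU _ _] := HD.
have /setDP [xC' xC] := xCC.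
suff PxC : principal x :\ x \subset C.
  have -> : C :|: [set x] = C :|: principal x.
    apply/eqP; rewrite eqEsubset setUS ?sub1set ?mem_principal //= subUset subsetUl.
    apply/subsetP => a aPx; have [-> | ax] := eqVneq a x; first by rewrite !inE eqxx orbT.
    by rewrite inE (subsetP PxC) // !inE ax.
  exact/DU/principal_in_lattice.
apply/subsetP => w; rewrite !inE => /andP [wx wPx]; apply: contraT => wC.
have wCC : w \in C' :\: C by rewrite inE wC (subsetP (principal_min C'D xC')).
have xPw : x \notin principal w.
  apply/negP => xPw.
  have /subsetP/(_ w wPx) : principal x \subset principal w :\ w.
    by apply: principal_min; rewrite ?principalD1_in_lattice // !inE xPw eq_sym wx.
  by rewrite !inE eqxx.
have : principal w \proper principal x.
  rewrite properEneq (principal_min (principal_in_lattice x) wPx) andbT.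
  by apply: contraNneq xPw => ->; apply: mem_principal.
by move/proper_card; rewrite ltnNge xmin.
Qed.

Lemma dual_lattice_accessible : accessible_distr_lattice (dual_lattice D).
Proof.
have [D0 DT DU DI _] := HD.
split=> [||A B|A B|A]; rewrite ?mem_dual_lattice ?setC0 ?setCT ?setCU ?setCI //.
- exact: DI.
- exact: DU.
move=> AD A0; have [|x] := lattice_augment AD DT.
  by rewrite properT -setC0 (inj_eq (@setC_inj _)).
by rewrite setTD setCK => xA; exists x; rewrite // mem_dual_lattice setCD.
Qed.

End AccessibleLattice.

Section UMatroid.

Variables (E : finType) (D : {set {set E}}) (rho : {set E} -> nat).
Hypothesis HU : is_umatroid D rho.

Lemma rank_le_add_card C C' : C \in D -> C' \in D -> C \subset C' ->
  (rho C' <= rho C + #|C' :\: C|)%N.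
Proof.
have [HD _ _ _ rho_add1] := HU.
have [n] := ubnP #|C' :\: C|; elim: n C => // n IH C ltn CD C'D CC'.
case: (eqVproper CC') => [-> | ltCC']; first exact: leq_addr.
have [x /setDP [xC' xC] CxD] := lattice_augment HD CD C'D ltCC'.
have CxC' : C :|: [set x] \subset C' by rewrite subUset CC' sub1set.
have card_CC : #|C' :\: C| = #|C' :\: (C :|: [set x])|.+1.
  by rewrite -setDDl (cardsD1 x) inE xC xC'.
have := IH _ _ CxD C'D CxC'; rewrite -card_CC => /(_ ltn).
have := rho_add1 _ _ CD CxD; lia.
Qed.

Lemma rank_setT_le C : C \in D -> (rho setT <= rho C + #|~: C|)%N.
Proof.
have [[_ DT _ _ _] _ _ _ _] := HU.
by move=> CD; rewrite -setTD; apply: rank_le_add_card; rewrite ?subsetT.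
Qed.

(* The subtraction never truncates on [dual_lattice D], by [rank_setT_le]. *)
Definition dual_rank (A : {set E}) : nat := (#|A| + rho (~: A) - rho setT)%N.

Lemma dual_umatroid : is_umatroid (dual_lattice D) dual_rank.
Proof.
have [HD rho0 rho_mono rho_submod rho_add1] := HU.
have [_ _ DU DI _] := HD.
split=> [|||A B|A e]; rewrite /dual_rank.
- exact: dual_lattice_accessible.
- by rewrite cards0 setC0 subnn.
- move=> A B; rewrite !mem_dual_lattice => AD BD AB.
  have := rank_le_add_card BD AD; rewrite setCS => /(_ AB).
  have -> : ~: A :\: ~: B = B :\: A by apply/setP => a; rewrite !inE negbK andbC.
  have := cardsID A B; rewrite (setIidPr AB); lia.
- rewrite !mem_dual_lattice => AD BD.
  have := rank_setT_le (DU _ _ AD BD); have := rank_setT_le (DI _ _ AD BD).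
  have := rank_setT_le AD; have := rank_setT_le BD.
  have := rho_submod _ _ AD BD; have := cardsUI A B.
  rewrite -setCI -setCU !setCK; lia.
- rewrite !mem_dual_lattice => AD AeD.
  have := rho_mono _ _ AeD AD; rewrite setCS subsetUl => /(_ isT).
  have := cardsU1 e A; rewrite setUC; lia.
Qed.

End UMatroid.

Lemma sumr_setT (I : finType) (V : nmodType) (F : I -> V) :
  \sum_(i in [set: I]) F i = \sum_i F i.
Proof. by apply: eq_bigl => i; rewrite in_setT. Qed.

Lemma sumr_setC (I : finType) (V : nmodType) (F : I -> V) (A : {set I}) :
  \sum_(i in A) F i + \sum_(i in ~: A) F i = \sum_i F i.
Proof. by rewrite -sumr_setT (big_setID (A := [set: I]) A) setTI setTD. Qed.

Lemma sumr_setUI (I : finType) (V : nmodType) (F : I -> V) (A B : {set I}) :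
  \sum_(i in A :|: B) F i + \sum_(i in A :&: B) F i =
  \sum_(i in A) F i + \sum_(i in B) F i.
Proof.
rewrite (big_setID (A := A :|: B) B) (big_setID (A := A) B).
rewrite [(A :|: B) :&: B]setIC setKU setDUl setDv setU0.
by rewrite addrAC [RHS]addrAC; congr (_ + _); apply: addrC.
Qed.

Section ComplementVector.

Variables (R : realType) (E : finType).

Definition compl_vec (x : {ffun E -> R}) : {ffun E -> R} := [ffun a => 1 - x a].

Lemma compl_vecK : involutive compl_vec.
Proof. by move=> x; apply/ffunP => a; rewrite !ffunE subKr. Qed.

Lemma sum_compl_vec (x : {ffun E -> R}) (A : {set E}) :
  \sum_(a in A) compl_vec x a = #|A|%:R - \sum_(a in A) x a.
Proof. by under eq_bigr do rewrite ffunE; rewrite sumrB sumr_const. Qed.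

Lemma support_compl_vec (x : {ffun E -> R}) : (forall e, x e = 0 \/ x e = 1) ->
  Defs.support (compl_vec x) = ~: Defs.support x.
Proof.
move=> x01; apply/setP => a; rewrite !inE ffunE.
by case: (x01 a) => ->; rewrite ?subr0 ?subrr ?eqxx ?oner_neq0.
Qed.

Lemma is_vertex_compl_vec (D1 D2 : {set {set E}}) (r1 r2 : {set E} -> nat) :
  (forall x, in_base_polyhedron D1 r1 x <-> in_base_polyhedron D2 r2 (compl_vec x)) ->
  forall x, is_vertex D1 r1 x -> is_vertex D2 r2 (compl_vec x).
Proof.
move=> PQ x [xP x_ext]; split=> [|y z t yQ zQ t0 t1 yz]; first exact/PQ.
have compl_P w : in_base_polyhedron D2 r2 w -> in_base_polyhedron D1 r1 (compl_vec w).
  by move=> wQ; apply/PQ; rewrite compl_vecK.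
rewrite -[y]compl_vecK -[z]compl_vecK (x_ext _ _ t (compl_P _ yQ) (compl_P _ zQ)) //.
by move=> a; move: (yz a); rewrite !ffunE; lra.
Qed.

End ComplementVector.

Section BasePolyhedron.

Variables (R : realType) (E : finType) (D : {set {set E}}) (rho : {set E} -> nat).

Definition tight (x : {ffun E -> R}) (A : {set E}) : bool :=
  (A \in D) && (\sum_(a in A) x a == (rho A)%:R).

Definition move_mass (x : {ffun E -> R}) (e f : E) (t : R) : {ffun E -> R} :=
  [ffun a => x a + t * ((a == e)%:R - (a == f)%:R)].

Lemma sum_move_mass x e f t (A : {set E}) :
  \sum_(a in A) move_mass x e f t a =
  \sum_(a in A) x a + t * ((e \in A)%:R - (f \in A)%:R).
Proof.
have sum_eq a : \sum_(i in A) ((i == a)%:R : R) = (a \in A)%:R.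
  have [aA | aA] := boolP (a \in A).
    rewrite (big_setD1 a aA) /= eqxx big1 ?addr0 // => i.
    by rewrite !inE => /andP [/negPf ->].
  by rewrite big1 // => i iA; case: eqP => // ia; rewrite -ia iA in aA.
under eq_bigr do rewrite ffunE.
by rewrite big_split /= -mulr_sumr sumrB !sum_eq.
Qed.

Lemma move_mass_in_base_polyhedron x e f :
  setT \in D -> in_base_polyhedron D rho x ->
  (forall A, tight x A -> (e \in A) = (f \in A)) ->
  exists2 eps, 0 < eps & forall t, `|t| <= eps ->
    in_base_polyhedron D rho (move_mass x e f t).
Proof.
move=> DT [x_le x_tot] unsep.
pose slack A := (rho A)%:R - \sum_(a in A) x a.
exists (\big[Num.min/1]_(A in D | ~~ tight x A) slack A).
  apply: (big_ind (fun r : R => 0 < r)) => // [r s r0 s0|A /andP [AD]].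
    by rewrite lt_min r0 s0.
  by rewrite /tight AD /= subr_gt0 lt_def eq_sym => ->; apply: x_le.
move=> t t_le; split=> [A AD|].
  rewrite sum_move_mass; case: (boolP (tight x A)) => [tA | ntA].
    by rewrite (unsep A tA) subrr mulr0 addr0 x_le.
  have : \big[Num.min/1]_(A in D | ~~ tight x A) slack A <= slack A.
    by rewrite (bigD1 A) /= ?AD ?ntA // ge_min lexx.
  have shift_le (b c : bool) : t * (b%:R - c%:R) <= `|t|.
    case: b; case: c; rewrite /= ?subrr ?mulr0 ?subr0 ?sub0r ?mulr1 ?mulrN1 ?ler_norm //.
    by rewrite -normrN ler_norm.
  by have := shift_le (e \in A) (f \in A); rewrite /slack; lra.
have tT : tight x setT by rewrite /tight DT sumr_setT x_tot eqxx.
by rewrite -sumr_setT sum_move_mass (unsep _ tT) subrr mulr0 addr0 sumr_setT.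
Qed.

Lemma vertex_tight_separates x e f : setT \in D -> is_vertex D rho x -> e != f ->
  exists2 A, tight x A & (e \in A) != (f \in A).
Proof.
move=> DT [xP x_ext] ef.
apply/exists_inP; apply: contraT => /exists_inPn unsep.
have [|eps eps_gt0 moveP] := @move_mass_in_base_polyhedron x e f DT xP.
  by move=> A tA; apply/eqP; have := unsep A tA; rewrite negbK.
have half_gt0 : (0 : R) < 1 / 2 by lra.
have half_lt1 : (1 / 2 : R) < 1 by lra.
have := x_ext _ _ _ (moveP eps _) (moveP (- eps) _) half_gt0 half_lt1.
rewrite normrN gtr0_norm // lexx => /(_ isT isT) eq_moves.
have /(congr1 (fun y : {ffun E -> R} => y e)) : move_mass x e f eps = move_mass x e f (- eps).
  by apply: eq_moves => a; rewrite !ffunE; lra.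
rewrite !ffunE eqxx (negPf ef) /= subr0 !mulr1; lra.
Qed.

Hypothesis HU : is_umatroid D rho.

Lemma tightUI x A B : in_base_polyhedron D rho x -> tight x A -> tight x B ->
  tight x (A :|: B) && tight x (A :&: B).
Proof.
move=> [x_le _] /andP [AD /eqP sA] /andP [BD /eqP sB].
have [[_ _ DU DI _] _ _ rho_submod _] := HU.
have := x_le _ (DU _ _ AD BD); have := x_le _ (DI _ _ AD BD).
have := sumr_setUI x A B; have := rho_submod _ _ AD BD.
rewrite -(ler_nat R) !natrD /tight DU ?DI //=; lra.
Qed.

(* [L] is the largest tight set avoiding [e] below the smallest tight set [M]
   containing [e]; tight sets separating the points of [M] force [M = e |: L]. *)
Lemma vertex_tight_step x e : is_vertex D rho x ->
  exists L, [/\ tight x L, tight x (e |: L) & e \notin L].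
Proof.
move=> xV; have [xP _] := xV; have [[D0 DT _ _ _] rho0 _ _ _] := HU.
have tU A B : tight x A -> tight x B -> tight x (A :|: B).
  by move=> tA tB; case/andP: (tightUI xP tA tB).
have tI A B : tight x A -> tight x B -> tight x (A :&: B).
  by move=> tA tB; case/andP: (tightUI xP tA tB).
have tT : tight x setT by rewrite /tight DT sumr_setT (proj2 xP) eqxx.
have t0 : tight x set0 by rewrite /tight D0 big_set0 rho0 eqxx.
pose M := \bigcap_(A | tight x A && (e \in A)) A.
pose L := \bigcup_(A | tight x A && (A \subset M) && (e \notin A)) A.
have tM : tight x M by apply: (big_ind (tight x)) => // A /andP [].
have eM : e \in M by apply/bigcapP => A /andP [].
have LM : L \subset M by apply/bigcupsP => A /andP [/andP []].
have eL : e \notin L by apply/bigcupP => [[A /andP [_ eA]]]; apply/negP.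
exists L; split => //; first by apply: (big_ind (tight x)) => // A /andP [/andP []].
suff -> : e |: L = M by [].
apply/eqP; rewrite eqEsubset subUset sub1set eM LM /=.
apply/subsetP => f fM; rewrite !inE; case: (eqVneq f e) => //= fe.
have [A tA] := vertex_tight_separates DT xV fe.
case: (boolP (e \in A)) => eA.
  by rewrite (subsetP (bigcap_inf A _) f fM) // tA eA.
rewrite eqbF_neg negbK => fA; apply: (subsetP (bigcup_sup (A :&: M) _)).
  by rewrite tI // subsetIr inE (negPf eA).
by rewrite inE fA fM.
Qed.

Lemma vertex_coord01 (x : {ffun E -> R}) e : is_vertex D rho x -> x e = 0 \/ x e = 1.
Proof.
move=> xV; have [_ _ rho_mono _ rho_add1] := HU.
have [L [/andP [LD /eqP sL] /andP [LeD /eqP sLe] eL]] := vertex_tight_step e xV.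
have -> : x e = (rho (e |: L))%:R - (rho L)%:R by rewrite -sL -sLe big_setU1 //= addrK.
have := rho_add1 _ e LD; rewrite setUC => /(_ LeD) rho_le.
have := rho_mono _ _ LD LeD (subsetUr _ _) => rho_ge.
have [-> | ->] : rho (e |: L) = rho L \/ rho (e |: L) = (rho L).+1 by lia.
  by rewrite subrr; left.
by rewrite -addn1 natrD addrAC subrr add0r; right.
Qed.

Lemma natr_dual_rank (A : {set E}) : ~: A \in D ->
  (dual_rank rho A)%:R = #|A|%:R + (rho (~: A))%:R - (rho setT)%:R :> R.
Proof.
move=> AD; rewrite /dual_rank natrB ?natrD // addnC.
by have := rank_setT_le HU AD; rewrite setCK.
Qed.

Lemma in_base_polyhedron_dual (x : {ffun E -> R}) :
  in_base_polyhedron D rho x <->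
  in_base_polyhedron (dual_lattice D) (dual_rank rho) (compl_vec x).
Proof.
have [[D0 DT _ _ _] rho0 _ _ _] := HU.
have sum_compl : \sum_e compl_vec x e = #|E|%:R - \sum_e x e.
  by rewrite -!sumr_setT sum_compl_vec cardsT.
have dual_rankT : (dual_rank rho setT)%:R = #|E|%:R - (rho setT)%:R :> R.
  by rewrite natr_dual_rank setCT // rho0 cardsT addr0.
rewrite /in_base_polyhedron sum_compl dual_rankT.
split=> [[x_le x_tot] | [y_le y_tot]]; split=> [A|]; try lra.
- rewrite mem_dual_lattice => AD; rewrite sum_compl_vec natr_dual_rank //.
  by have := x_le _ AD; have := sumr_setC x A; lra.
- move=> AD; have CAD : ~: A \in dual_lattice D by rewrite mem_dual_lattice setCK.
  have := y_le _ CAD; rewrite sum_compl_vec natr_dual_rank setCK //.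
  by have := sumr_setC x (~: A); rewrite setCK; lra.
Qed.

Lemma is_vertex_dual (x : {ffun E -> R}) :
  is_vertex D rho x <-> is_vertex (dual_lattice D) (dual_rank rho) (compl_vec x).
Proof.
split; first exact: is_vertex_compl_vec in_base_polyhedron_dual x.
rewrite -{2}(compl_vecK x); apply: is_vertex_compl_vec => y.
by rewrite in_base_polyhedron_dual compl_vecK.
Qed.

Lemma support_compl_vertex (x : {ffun E -> R}) : is_vertex D rho x ->
  Defs.support (compl_vec x) = ~: Defs.support x.
Proof. by move=> xV; apply: support_compl_vec => e; have := vertex_coord01 e xV. Qed.

End BasePolyhedron.

Theorem proposition6p2 (R : realType) (E : finType) (le : rel E)
  (Bs : {set {set E}}) :
  is_poset le ->
  umatroid_bases R le Bs ->
  umatroid_bases R (dual_rel le) [set ~: B | B in Bs].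
Proof.
move=> _ [D [rho [HU le_char Bs_bases]]].
exists (dual_lattice D), (dual_rank rho); split.
- exact: dual_umatroid.
- by move=> i j; rewrite char_le_dual le_char.
move=> B; split.
  case/imsetP => _ /Bs_bases [x [xV ->]] ->.
  exists (compl_vec x); rewrite (support_compl_vertex HU xV).
  by rewrite -(is_vertex_dual HU).
case=> y [yV ->]; have cyV : is_vertex D rho (compl_vec y).
  by rewrite (is_vertex_dual HU) compl_vecK.
apply/imsetP; exists (Defs.support (compl_vec y)).
  by apply/Bs_bases; exists (compl_vec y).
by rewrite -{1}(compl_vecK y) (support_compl_vertex HU cyV).
Qed.
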